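(* Let $S=K[x_1,\dots,x_n]$ with $K$ infinite, $M$ a finitely generated graded $S$-module and $y_1,\dots,y_n$ generic linear forms for $M$. For all integers $i\ge1$, $k\ge 0$ and $1\le p\le n$, $$h_{i,i+k}(p)=\sum_{j=1}^{p-i+1}\binom{p-j}{i-1}\alpha_{j,k}-\sum_{(a,b)\in A_{i,p}}\left[\binom{p-b-1}{i-a}\delta_{a,b,a+k}+\binom{p-b-1}{i-a-1}\delta_{a,b,a+k+1}\right],$$ where $A_{i,p}=\{(a,b)\in\mathbb N^2: 1\le b\le p-1,\ \max\{i-p+b,1\}\le a\le i\}$.
   Context: For $p=1,\dots,n$ let $A_p=\big((y_1,\dots,y_{p-1})M:_M y_p\big)/(y_1,\dots,y_{p-1})M$, a graded module of finite length, and $\alpha_{p,j}=\dim_K(A_p)_j$ (generic graded annihilator numbers). $H_i(p)=H_i(y_1,\dots,y_p;M)$ is Koszul homology and $h_{ij}(p)=\dim_K H_i(p)_j$. For $1\le b\le n-1$, $\phi_{a,b}:H_a(b)\to H_a(b)$ is the degree-raising map given by multiplication by $\pm y_{b+1}$ appearing in the long exact Koszul homology sequence $\cdots\to H_a(b)\xrightarrow{\phi_{a,b}}H_a(b)\to H_a(b+1)\to H_{a-1}(b)\to\cdots$, and $\delta_{a,b,c}=\dim_K(\mathrm{Im}\,\phi_{a,b})_c$. Binomial coefficients $\binom{m}{r}$ are $0$ if $r<0$ or $r>m$. *)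

From HB Require Import structures.
From mathcomp Require Import all_boot all_order all_algebra.
From mathcomp Require Import mpoly.
Unset Printing Implicit Defensive.
Import GRing.Theory.
Local Open Scope ring_scope.

Definition K_infinite (K : fieldType) : Prop :=
  forall s : seq K, exists x : K, x \notin s.

Definition binz (a : nat) (r : int) : nat :=
  match r with Posz r' => 'C(a, r') | Negz _ => 0%N end.

Section GradedModule.
Context {K : fieldType} {n : nat} {m : int -> nat}.
(* M_e = 'rV[K]_(m e);  x_k acts M_e -> M_(e+1) by v |-> v *m X k e *)
Variable X : forall (k : 'I_n) (e : int), 'M[K]_(m e, m (e + 1)).

(* the variables act by commuting maps: this is a graded S-module *)
Definition graded_module : Prop :=
  forall (k l : 'I_n) (e : int), X k e *m X l (e + 1) = X l e *m X k (e + 1).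

(* finitely generated: bounded below, and generated in degrees <= d1 *)
Definition fin_generated : Prop :=
  (exists d0 : int, forall e : int, e < d0 -> m e = 0%N) /\
  (exists d1 : int, forall e : int, d1 <= e ->
     forall v : 'rV[K]_(m (e + 1)),
       exists u : 'I_n -> 'rV[K]_(m e), v = \sum_k u k *m X k e).

(* x_k : M_e -> M_e' (meaningful when e' = e + 1, zero otherwise) *)
Definition Xto (k : 'I_n) (e e' : int) : 'M[K]_(m e, m e') :=
  match (e + 1 =P e') with
  | ReflectT H => castmx (erefl, congr1 m H) (X k e)
  | ReflectF _ => 0
  end.

Definition Ymx (cf : 'I_n -> K) (e e' : int) : 'M[K]_(m e, m e') :=
  \sum_k cf k *: Xto k e e'.

(* The sequence y_1..y_n is given by a matrix C: y_(t+1) = sum_k C t k x_k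
   (0-based row t). *)
Definition ycoef (C : 'M[K]_n) (l : nat) : 'I_n -> K :=
  fun k => oapp (fun t : 'I_n => C t k) 0 (insub l).

(* Koszul complex K(y_1..y_p; M): a chain of homological degree i and
   module degree e is a family (f F)_F, F ranging over i-subsets of
   {0..p-1} (0-based indices of y_1..y_p), with f F in M_e. *)
Definition Ch (e : int) := {ffun {set 'I_n} -> 'rV[K]_(m e)}.

Definition goodF (p i : nat) (F : {set 'I_n}) : bool :=
  (F \subset [set t : 'I_n | (t < p)%N]) && (#|F| == i).

Definition chproj (p i : nat) (e : int) (f : Ch e) : Ch e :=
  [ffun F => if goodF p i F then f F else 0].

Definition Kch (p i : nat) (e : int) : {vspace Ch e} :=
  limg (linfun (chproj p i e)).

Definition kdiff (C : 'M[K]_n) (p i : nat) (e e' : int) (f : Ch e) : Ch e' :=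
  [ffun G : {set 'I_n} =>
     if (0 < i)%N && goodF p i.-1 G then
       \sum_(t : 'I_n | (t < p)%N && (t \notin G))
          (-1) ^+ #|[set s in G | (s < t)%N]| *: (f (t |: G) *m Ymx (C t) e e')
     else 0].

Definition Zcyc (C : 'M[K]_n) (p i : nat) (e : int) : {vspace Ch e} :=
  (lker (linfun (kdiff C p i e (e + 1))) :&: Kch p i e)%VS.
Definition Bbd (C : 'M[K]_n) (p i : nat) (e : int) : {vspace Ch e} :=
  (linfun (kdiff C p i.+1 (e - 1) e) @: Kch p i.+1 (e - 1))%VS.

(* h_{ij}(p) = dim_K H_i(y_1..y_p; M)_j  (internal degree j = e + i) *)
Definition hK (C : 'M[K]_n) (p i : nat) (j : int) : nat :=
  (\dim (Zcyc C p i (j - i%:Z)) - \dim (Bbd C p i (j - i%:Z)))%N.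

Definition mulch (cf : 'I_n -> K) (e e' : int) (f : Ch e) : Ch e' :=
  [ffun F => f F *m Ymx cf e e'].

(* delta_{a,b,c} = dim (Im phi_{a,b})_c, phi_{a,b} = mult. by y_(b+1)
   on H_a(b):  Im in degree c = (y_(b+1) Z_(c-1) + B_c) / B_c *)
Definition delta (C : 'M[K]_n) (a b : nat) (c : int) : nat :=
  let e := c - a%:Z in
  (\dim (linfun (mulch (ycoef C b) (e - 1) e) @: Zcyc C b a (e - 1)
          + Bbd C b a e)%VS
   - \dim (Bbd C b a e))%N.

Definition idealM (C : 'M[K]_n) (p : nat) (d : int) : {vspace 'rV[K]_(m d)} :=
  (\sum_(t < n | (t < p.-1)%N)
      limg (linfun (mulmxr (Ymx (C t) (d - 1) d))))%VS.

(* alpha_{p,j} = dim ((y_1..y_(p-1))M :_M y_p / (y_1..y_(p-1))M)_j *)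
Definition alpha (C : 'M[K]_n) (p : nat) (j : int) : nat :=
  (\dim (linfun (mulmxr (Ymx (ycoef C p.-1) j (j + 1))) @^-1: idealM C p (j + 1))%VS
   - \dim (idealM C p j))%N.

End GradedModule.

From HB Require Import structures.
From mathcomp Require Import all_boot all_order all_algebra.
From mathcomp Require Import zify ring.
From mathcomp Require Import mpoly.
Import GRing.Theory.
Local Open Scope ring_scope.
Set Implicit Arguments.
Unset Strict Implicit.

(* The Koszul complex K(y_1..y_(p+1); M) is the mapping cone of multiplication
   by y_(p+1) on K(y_1..y_p; M).  Its long exact sequence expresses h_(i+1)(p+1)
   as the dimension of the cokernel of y_(p+1) on H_(i+1)(p) plus that of its
   kernel on H_i(p), i.e. as the Pascal-type recursion
     h_(i+1,j)(p+1) = h_(i+1,j)(p) - delta_(i+1,p,j) + h_(i,j-1)(p) - delta_(i,p,j),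
   where for i = 0 the kernel of y_(p+1) on H_0(p) = M/(y_1..y_p)M has
   dimension alpha_(p+1).  Starting from h_i(0) = 0, this recursion is solved
   by the binomial sums of the statement. *)

Lemma dimv_preim_img_add (K : fieldType) (aT rT : vectType K) (f : 'Hom(aT, rT))
    (U : {vspace aT}) (V : {vspace rT}) :
  (\dim (U :&: f @^-1: V) + \dim (f @: U + V) = \dim U + \dim V)%N.
Proof.
have dimUV := limg_ker_dim f (U :&: f @^-1: V).
have dimU := limg_ker_dim f U.
have dim_sum := dimv_sum_cap (f @: U) V.
have kerUV : ((U :&: f @^-1: V) :&: lker f = U :&: lker f)%VS.
  apply/vspaceP => x; rewrite !memv_cap -memv_preim memv_ker.
  by case: (f x =P 0) => [->|]; rewrite ?mem0v ?andbT ?andbF.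
have imgUV : (f @: (U :&: f @^-1: V) = f @: U :&: V)%VS.
  apply/vspaceP => y; rewrite memv_cap; apply/memv_imgP/andP.
    case=> x; rewrite memv_cap -memv_preim => /andP [xU fxV] ->.
    by rewrite memv_img.
  case=> /memv_imgP [x xU ->] fxV; exists x => //.
  by rewrite memv_cap xU -memv_preim.
rewrite kerUV imgUV in dimUV; lia.
Qed.

Lemma big_nat_widen_zero (V : nmodType) (f : nat -> V) l u v : (u <= v)%N ->
  (forall j, (u <= j < v)%N -> f j = 0) ->
  \sum_(l <= j < u) f j = \sum_(l <= j < v) f j.
Proof.
move=> uv f0; case: (leqP l u) => lu.
  rewrite (big_cat_nat lu uv) /= [X in _ + X](_ : _ = 0) ?addr0 //.
  by rewrite big_nat big1 // => j /f0.
rewrite big_geq ?(ltnW lu) // big_nat big1 // => j /andP [lj jv].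
by apply: f0; rewrite jv andbT (leq_trans (ltnW lu) lj).
Qed.

Lemma big_nat_shrink_zero (V : nmodType) (f : nat -> V) l u v : (l <= u)%N ->
  (forall j, (l <= j < u)%N -> f j = 0) ->
  \sum_(l <= j < v) f j = \sum_(u <= j < v) f j.
Proof.
move=> lu f0; case: (leqP u v) => uv.
  rewrite (big_cat_nat lu uv) /= [X in X + _](_ : _ = 0) ?add0r //.
  by rewrite big_nat big1 // => j /f0.
rewrite [RHS]big_geq ?(ltnW uv) // big_nat big1 // => j /andP [lj jv].
by apply: f0; rewrite lj (leq_trans jv (ltnW uv)).
Qed.

Lemma binz_neg k r : r < 0 -> binz k r = 0%N.
Proof. by case: r. Qed.

Lemma binz_small k r : k%:Z < r -> binz k r = 0%N.
Proof. by case: r => // r /= kr; rewrite bin_small // -ltz_nat. Qed.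

Lemma binz0n r : binz 0 r = (r == 0).
Proof. by case: r => [[|r]|r]. Qed.

Lemma binzS k r : binz k.+1 r = (binz k r + binz k (r - 1))%N.
Proof.
case: r => [[|r]|r].
- by rewrite (@binz_neg _ (0 - 1)) //= !bin0.
- have -> : Posz r.+1 - 1 = Posz r by rewrite -addn1 PoszD addrK.
  by rewrite /= binS addnC.
- by rewrite (@binz_neg _ (Negz r - 1)) //; lia.
Qed.

(* [alpha j], [delta0 a b] and [delta1 a b] stand for alpha_(j,k), delta_(a,b,a+k)
   and delta_(a,b,a+k+1) at a fixed k. *)
Section ClosedForm.
Variables (alpha : nat -> nat) (delta0 delta1 : nat -> nat -> nat).

Definition alpha_sum p i := \sum_(j < p) ('C(p - j.+1, i.-1) * alpha j.+1)%N%:Z.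

Definition delta_sum_at p i b := \sum_(a < i)
  (binz (p - b - 1) (i%:Z - a.+1%:Z) * delta0 a.+1 b
   + binz (p - b - 1) (i%:Z - a.+1%:Z - 1) * delta1 a.+1 b)%N%:Z.

Definition delta_sum p i := \sum_(b < p) delta_sum_at p i b.

Definition h_formula p i := alpha_sum p i - delta_sum p i.

Lemma alpha_sumSS p i : alpha_sum p.+1 i.+1 =
  alpha_sum p i.+1 + (if i is i'.+1 then alpha_sum p i else (alpha p.+1)%:Z).
Proof.
rewrite /alpha_sum big_ord_recr /= subnn.
have shift (j : 'I_p) : (p.+1 - (widen_ord (leqnSn p) j).+1 = (p - j.+1).+1)%N.
  by rewrite /= subSS subnSK.
under eq_bigr => j _ do rewrite shift.
case: i => [|i] /=.
  by rewrite bin0 mul1n; congr (_ + _); apply: eq_bigr => j _; rewrite !bin0.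
rewrite bin0n mul0n addr0 -big_split /=; apply: eq_bigr => j _.
by rewrite binS mulnDl PoszD.
Qed.

Lemma delta_sum_atSS p i b : (b < p)%N ->
  delta_sum_at p.+1 i.+1 b =
  delta_sum_at p i.+1 b + (if i is i'.+1 then delta_sum_at p i b else 0).
Proof.
move=> bp; rewrite /delta_sum_at.
have -> : (p.+1 - b - 1 = (p - b - 1).+1)%N by lia.
set k := (p - b - 1)%N.
pose lower (a : nat) := (binz k (i.+1%:Z - a.+1%:Z - 1) * delta0 a.+1 b
   + binz k (i.+1%:Z - a.+1%:Z - 1 - 1) * delta1 a.+1 b)%N%:Z.
rewrite (eq_bigr (fun a : 'I_i.+1 => (binz k (i.+1%:Z - a.+1%:Z) * delta0 a.+1 b
   + binz k (i.+1%:Z - a.+1%:Z - 1) * delta1 a.+1 b)%N%:Z + lower a)); last first.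
  by move=> a _; rewrite /lower -PoszD !binzS !mulnDl addnACA.
rewrite big_split /=; congr (_ + _).
case: i @lower => [|i] lower; first by rewrite big_ord1 /lower /= !mul0n.
rewrite big_ord_recr /= [lower _](_ : _ = 0); last by rewrite /lower !binz_neg //; lia.
rewrite addr0; apply: eq_bigr => a _; rewrite /lower /=.
by have -> : i.+2%:Z - a.+1%:Z - 1 = i.+1%:Z - a.+1%:Z by lia.
Qed.

Lemma delta_sum_at_last p i : delta_sum_at p.+1 i.+1 p =
  (delta0 i.+1 p)%:Z + (if i is i'.+1 then (delta1 i'.+1 p)%:Z else 0).
Proof.
rewrite /delta_sum_at (_ : (p.+1 - p - 1 = 0)%N); last by lia.
under eq_bigr => a _ do rewrite !binz0n.
rewrite big_ord_recr /= subrr eqxx /= mul1n mul0n addn0 addrC; congr (_ + _).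
case: i => [|i]; first by rewrite big_ord0.
rewrite big_ord_recr /= big1 ?add0r.
  have -> : (i.+2%:Z - i.+1%:Z == 0) = false by apply/negbTE/eqP; lia.
  have -> : (i.+2%:Z - i.+1%:Z - 1 == 0) = true by apply/eqP; lia.
  by rewrite mul0n add0n mul1n.
move=> a _ /=; have ai := ltn_ord a.
have -> : (i.+2%:Z - a.+1%:Z == 0) = false by apply/negbTE/eqP; lia.
have -> : (i.+2%:Z - a.+1%:Z - 1 == 0) = false by apply/negbTE/eqP; lia.
by rewrite !mul0n.
Qed.

Lemma h_formulaSS p i : h_formula p.+1 i.+1 =
  h_formula p i.+1 - (delta0 i.+1 p)%:Z
  + (if i is i'.+1 then h_formula p i'.+1 - (delta1 i'.+1 p)%:Z
     else (alpha p.+1)%:Z).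
Proof.
rewrite /h_formula alpha_sumSS /delta_sum big_ord_recr /= delta_sum_at_last.
rewrite (eq_bigr (fun b : 'I_p => delta_sum_at p i.+1 b
  + (if i is i'.+1 then delta_sum_at p i b else 0))); last first.
  by move=> b _; rewrite delta_sum_atSS.
rewrite big_split /=; case: i => [|i] /=; last by ring.
rewrite big1_eq; ring.
Qed.

Lemma h_formula_recursion (N : nat) (h : nat -> nat -> nat) :
  (forall i, h 0 i.+1 = 0%N) ->
  (forall p i, (p < N)%N -> (h p.+1 i.+1)%:Z = (h p i.+1)%:Z - (delta0 i.+1 p)%:Z
     + (if i is i'.+1 then (h p i'.+1)%:Z - (delta1 i'.+1 p)%:Z
        else (alpha p.+1)%:Z)) ->
  forall p, (p <= N)%N -> forall i, (h p i.+1)%:Z = h_formula p i.+1.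
Proof.
move=> h0 hS; elim=> [|p IHp] pN i.
  by rewrite h0 /h_formula /alpha_sum /delta_sum !big_ord0 subrr.
rewrite hS // h_formulaSS IHp ?(ltnW pN) //; case: i => [|i] //.
by rewrite IHp ?(ltnW pN).
Qed.

Lemma alpha_sum_nat p i :
  \sum_(1 <= j < p.+2 - i.+1) ('C(p - j, i.+1 - 1) * alpha j)%N%:Z =
  alpha_sum p i.+1.
Proof.
rewrite (@big_nat_widen_zero _ _ 1 _ p.+1); first last.
- by move=> j /andP [j1 jp]; rewrite bin_small ?mul0n //; lia.
- by lia.
by rewrite big_add1 /= big_mkord subn1.
Qed.

Lemma delta_sum_nat p i :
  (forall a, delta0 a.+1 0 = 0%N) -> (forall a, delta1 a.+1 0 = 0%N) ->
  \sum_(1 <= b < p) \sum_(maxn (i.+1 + b - p) 1 <= a < i.+2)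
    (binz (p - b - 1) (i.+1%:Z - a%:Z) * delta0 a b
     + binz (p - b - 1) (i.+1%:Z - a%:Z - 1) * delta1 a b)%N%:Z =
  delta_sum p i.+1.
Proof.
move=> delta00 delta10; rewrite /delta_sum -(big_mkord xpredT (delta_sum_at p i.+1)).
case: p => [|p]; first by rewrite !big_geq.
rewrite [RHS]big_ltn // [X in _ = X + _]big1 ?add0r; last first.
  by move=> a _; rewrite delta00 delta10 !muln0.
apply: eq_big_nat => b /andP [b1 bp].
rewrite -(@big_nat_shrink_zero _ _ 1) ?leq_maxr //; last first.
  by move=> a /andP [a1 ai]; rewrite !binz_small ?muln0 ?mul0n //; lia.
by rewrite big_add1 /= big_mkord.
Qed.

End ClosedForm.

Section GoodSets.
Variable n : nat.
Implicit Types (F G : {set 'I_n}) (t q : 'I_n).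

Lemma goodF_lt p i F t : goodF p i F -> t \in F -> (t < p)%N.
Proof. by case/andP=> /subsetP sF _ /sF; rewrite inE. Qed.

Lemma goodF0 p G : goodF p 0 G = (G == set0).
Proof.
rewrite /goodF cards_eq0; case: eqP => [->|]; rewrite ?andbF ?andbT //.
by rewrite sub0set.
Qed.

Lemma goodF_S p i F : goodF p i F -> goodF p.+1 i F.
Proof.
case/andP=> /subsetP sF cardF; rewrite /goodF cardF andbT.
by apply/subsetP => t /sF; rewrite !inE => /ltnW.
Qed.

Lemma goodF_setU1 p i G t : (t < p)%N -> t \notin G ->
  goodF p i.+1 (t |: G) = goodF p i G.
Proof. by move=> tp tG; rewrite /goodF subUset sub1set inE tp cardsU1 tG. Qed.

Section LastIndex.
Variables (p : nat) (q : 'I_n).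
Hypothesis qp : nat_of_ord q = p.

Lemma goodF_last_notin i G : goodF p i G -> q \notin G.
Proof. by move=> gG; apply/negP => /(goodF_lt gG); rewrite qp ltnn. Qed.

Lemma goodF_S_notin i G : q \notin G -> goodF p.+1 i G = goodF p i G.
Proof.
move=> qG; rewrite /goodF; congr (_ && _).
apply/subsetP/subsetP => sG t tG; move: (sG t tG); rewrite !inE //; last exact: ltnW.
rewrite ltnS leq_eqVlt; case/orP=> // /eqP tp.
have tq : t = q by apply: val_inj; rewrite /= tp qp.
by move: qG; rewrite -tq tG.
Qed.

Lemma goodF_S_in i F : q \in F -> goodF p.+1 i.+1 F = goodF p i (F :\ q).
Proof.
move=> qF; rewrite -{1}(setD1K qF) goodF_setU1 ?qp ?setD11 //.
by rewrite goodF_S_notin // setD11.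
Qed.

Lemma ltnS_last t : (t < p.+1)%N = (t == q) || (t < p)%N.
Proof. by rewrite ltnS leq_eqVlt -qp. Qed.

End LastIndex.
End GoodSets.

Section Koszul.
Variables (K : fieldType) (n : nat) (m : int -> nat).
Variable X : forall (k : 'I_n) (e : int), 'M[K]_(m e, m (e + 1)).
Hypothesis gmX : graded_module X.
Variable C : 'M[K]_n.

Local Notation Ch := (@Ch K n m).
Local Notation Kch := (@Kch K n m).
Local Notation chproj := (@chproj K n m).
Local Notation kd := (kdiff X C).
Local Notation Y := (Ymx X).
Local Notation mulch := (mulch X).

Lemma Xto_comm k l e e' e'' :
  Xto X k e e' *m Xto X l e' e'' = Xto X l e e' *m Xto X k e' e''.
Proof.
rewrite /Xto; case: (e + 1 =P e') => [ee'|_]; last by rewrite !mul0mx.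
case: (e' + 1 =P e'') => [e'e''|_]; last by rewrite !mulmx0.
by subst e' e''; rewrite !castmx_id gmX.
Qed.

Lemma Ymx_comm a b e e' e'' :
  Y a e e' *m Y b e' e'' = Y b e e' *m Y a e' e''.
Proof.
rewrite /Ymx !mulmx_suml.
under eq_bigr do rewrite mulmx_sumr.
under [RHS]eq_bigr do rewrite mulmx_sumr.
rewrite [RHS]exchange_big /=; apply: eq_bigr => k _; apply: eq_bigr => l _.
by rewrite -!scalemxAl -!scalemxAr !scalerA Xto_comm mulrC.
Qed.

(* Since q is the largest index, a chain of K(y_1..y_(p+1)) is
   f = f' + g /\ e_q with f', g chains of K(y_1..y_p): [chcoef q f] extracts g
   and [chwedge q g] builds g /\ e_q. *)
Definition chcoef (q : 'I_n) e (f : Ch e) : Ch e :=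
  [ffun G : {set 'I_n} => if q \notin G then f (q |: G) else 0].

Definition chwedge (q : 'I_n) e (g : Ch e) : Ch e :=
  [ffun F : {set 'I_n} => if q \in F then g (F :\ q) else 0].

Definition ch0 e (v : 'rV[K]_(m e)) : Ch e :=
  [ffun F : {set 'I_n} => if F == set0 then v else 0].

Lemma chproj_is_linear p i e : linear (chproj p i e).
Proof.
move=> a f g; apply/ffunP=> F; rewrite !ffunE.
by case: ifP => _ //; rewrite scaler0 addr0.
Qed.

Lemma kdiff_is_linear p i e e' : linear (kd p i e e').
Proof.
move=> a f g; apply/ffunP=> G; rewrite !ffunE.
case: ifP => _; last by rewrite scaler0 addr0.
rewrite scaler_sumr -big_split /=; apply: eq_bigr => t _.
by rewrite !ffunE mulmxDl scalerDr -scalemxAl !scalerA mulrC.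
Qed.

Lemma mulch_is_linear cf e e' : linear (mulch cf e e').
Proof. by move=> a f g; apply/ffunP=> G; rewrite !ffunE mulmxDl -scalemxAl. Qed.

Lemma chcoef_is_linear q e : linear (@chcoef q e).
Proof.
move=> a f g; apply/ffunP=> F; rewrite !ffunE.
by case: ifP => _ //; rewrite scaler0 addr0.
Qed.

Lemma chwedge_is_linear q e : linear (@chwedge q e).
Proof.
move=> a f g; apply/ffunP=> F; rewrite !ffunE.
by case: ifP => _ //; rewrite scaler0 addr0.
Qed.

Lemma ch0_is_linear e : linear (@ch0 e).
Proof.
move=> a u v; apply/ffunP => F; rewrite !ffunE.
by case: ifP => _ //; rewrite scaler0 addr0.
Qed.

HB.instance Definition _ (p i : nat) (e : int) :=
  GRing.isLinear.Build K (Ch e) (Ch e) _ (chproj p i e) (@chproj_is_linear p i e).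
HB.instance Definition _ (p i : nat) (e e' : int) :=
  GRing.isLinear.Build K (Ch e) (Ch e') _ (kd p i e e') (@kdiff_is_linear p i e e').
HB.instance Definition _ (cf : 'I_n -> K) (e e' : int) :=
  GRing.isLinear.Build K (Ch e) (Ch e') _ (mulch cf e e') (@mulch_is_linear cf e e').
HB.instance Definition _ (q : 'I_n) (e : int) :=
  GRing.isLinear.Build K (Ch e) (Ch e) _ (@chcoef q e) (@chcoef_is_linear q e).
HB.instance Definition _ (q : 'I_n) (e : int) :=
  GRing.isLinear.Build K (Ch e) (Ch e) _ (@chwedge q e) (@chwedge_is_linear q e).
HB.instance Definition _ (e : int) :=
  GRing.isLinear.Build K 'rV[K]_(m e) (Ch e) _ (@ch0 e) (@ch0_is_linear e).

Lemma KchP p i e (x : Ch e) :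
  reflect (forall F, ~~ goodF p i F -> x F = 0) (x \in Kch p i e).
Proof.
apply: (iffP memv_imgP) => [[u _ ->] F nF | x0].
  by rewrite lfunE ffunE (negbTE nF).
exists x; rewrite ?memvf // lfunE; apply/ffunP => F; rewrite ffunE.
by case: ifP => // /negbT /x0 ->.
Qed.

Lemma chprojK p i e (x : Ch e) : x \in Kch p i e -> chproj p i e x = x.
Proof.
move/KchP=> x0; apply/ffunP=> F; rewrite ffunE.
by case: ifP => // /negbT /x0 ->.
Qed.

Lemma chproj_Kch p i e (x : Ch e) : chproj p i e x \in Kch p i e.
Proof. by apply/KchP => F nF; rewrite ffunE (negbTE nF). Qed.

Lemma Kch_S p i e (x : Ch e) : x \in Kch p i e -> x \in Kch p.+1 i e.
Proof. by move/KchP=> x0; apply/KchP => F nF; apply/x0/(contra (@goodF_S _ _ _ _) nF). Qed.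

Lemma Kch0S_eq0 i e (x : Ch e) : x \in Kch 0 i.+1 e -> x = 0.
Proof.
move/KchP => x0; apply/ffunP => F; rewrite ffunE; apply: x0.
apply/negP => /andP [/subsetP sF /eqP cardF].
suff F0 : F = set0 by move: cardF; rewrite F0 cards0.
by apply/setP => t; rewrite inE; apply/negbTE/negP => /sF; rewrite inE ltn0.
Qed.

Lemma kdiff_Kch p i e e' (x : Ch e) : kd p i e e' x \in Kch p i.-1 e'.
Proof. by apply/KchP => F nF; rewrite ffunE (negbTE nF) andbF. Qed.

Lemma kdiff_chproj p i e e' (x : Ch e) : kd p i e e' (chproj p i e x) = kd p i e e' x.
Proof.
apply/ffunP => G; rewrite !ffunE; case: ifP => // /andP [].
case: i x => // i x _ /= gG; apply: eq_bigr => t /andP [tp tG].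
by rewrite ffunE goodF_setU1 ?gG.
Qed.

Lemma mulch_Kch p i e e' cf (x : Ch e) :
  x \in Kch p i e -> mulch cf e e' x \in Kch p i e'.
Proof. by move/KchP=> x0; apply/KchP => F nF; rewrite ffunE x0 ?mul0mx. Qed.

Lemma kdiff_mulch p i e e' e'' cf (g : Ch e) :
  kd p i e' e'' (mulch cf e e' g) = mulch cf e' e'' (kd p i e e' g).
Proof.
apply/ffunP => G; rewrite !ffunE; case: ifP => _; last by rewrite mul0mx.
rewrite mulmx_suml; apply: eq_bigr => t _.
by rewrite ffunE -scalemxAl -!mulmxA Ymx_comm.
Qed.

Lemma kdiff0p i e e' (x : Ch e) : kd 0 i e e' x = 0.
Proof.
apply/ffunP => G; rewrite !ffunE; case: ifP => // _.
by apply: big1 => t /andP []; rewrite ltn0.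
Qed.

Section LastVariable.
Variables (p : nat) (q : 'I_n).
Hypothesis qp : nat_of_ord q = p.

Lemma Kch_last0 i e (x : Ch e) (G : {set 'I_n}) : x \in Kch p i e -> q \in G -> x G = 0.
Proof. by move/KchP=> x0 qG; apply/x0/negP => /(goodF_last_notin qp); rewrite qG. Qed.

Lemma chcoef_Kch i e (x : Ch e) : x \in Kch p i e -> chcoef q x = 0.
Proof.
move=> xK; apply/ffunP => G; rewrite !ffunE.
by case: ifP => // _; rewrite (Kch_last0 xK) ?setU11.
Qed.

Lemma chcoef_KchS i e (f : Ch e) : f \in Kch p.+1 i.+1 e -> chcoef q f \in Kch p i e.
Proof.
move/KchP => f0; apply/KchP => G nG; rewrite ffunE; case: ifP => // qG.
by apply: f0; rewrite goodF_setU1 ?qp // (goodF_S_notin qp).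
Qed.

Lemma chwedge_Kch i e (g : Ch e) : g \in Kch p i e -> chwedge q g \in Kch p.+1 i.+1 e.
Proof.
move/KchP => g0; apply/KchP => F nF; rewrite ffunE; case: ifP => // qF.
by apply: g0; rewrite -(goodF_S_in qp _ qF).
Qed.

Lemma chcoef_wedge i e (g : Ch e) : g \in Kch p i e -> chcoef q (chwedge q g) = g.
Proof.
move=> gK; apply/ffunP => G; rewrite !ffunE; case: ifP => qG.
  by rewrite setU11 setU1K.
by move/negbT: qG; rewrite negbK => /(Kch_last0 gK) ->.
Qed.

Lemma chproj_wedge i e (g : Ch e) : chproj p i e (chwedge q g) = 0.
Proof.
apply/ffunP => F; rewrite !ffunE; case: ifP => // gF; case: ifP => // qF.
by move: (goodF_last_notin qp gF); rewrite qF.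
Qed.

Lemma chain_split i e (f : Ch e) : f \in Kch p.+1 i.+1 e ->
  f = chproj p i.+1 e f + chwedge q (chcoef q f).
Proof.
move=> fK; apply/ffunP => F; rewrite !ffunE.
case: (boolP (q \in F)) => qF.
  have nF : ~~ goodF p i.+1 F by apply/negP => /(goodF_last_notin qp); rewrite qF.
  by rewrite (negbTE nF) add0r setD11 setD1K.
rewrite addr0; case: ifP => // gF.
by move/KchP: fK => ->//; rewrite (goodF_S_notin qp _ qF) gF.
Qed.

(* The Koszul differential of K(y_1..y_(p+1)) in the decomposition of
   [chain_split]: K(y_1..y_(p+1)) is the mapping cone of multiplication by
   y_(p+1) on K(y_1..y_p). *)
Lemma kdiff_split i e e' (f : Ch e) : f \in Kch p.+1 i.+1 e ->
  kd p.+1 i.+1 e e' f = kd p i.+1 e e' (chproj p i.+1 e f)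
     + chwedge q (kd p i e e' (chcoef q f))
     + (-1) ^+ i *: mulch (C q) e e' (chcoef q f).
Proof.
move=> fK; apply/ffunP => G; rewrite !ffunE /=.
case: (boolP (q \in G)) => qG.
  rewrite mul0mx scaler0 addr0.
  have -> : goodF p i G = false by apply/negP => /(goodF_last_notin qp); rewrite qG.
  rewrite add0r; case: i fK => [|i] fK.
    by rewrite goodF0; case: eqP => // G0; move: qG; rewrite G0 inE.
  rewrite (goodF_S_in qp _ qG) /=; case: ifP => // gG.
  apply: eq_big => [t|t /andP [tp tG]].
    rewrite in_setD1 negb_and negbK (ltnS_last qp); case: (t =P q) => [->|_] //=.
    by rewrite qG qp ltnn.
  have tq : t != q by apply: contraNneq tG => ->.
  move: tp; rewrite (ltnS_last qp) (negbTE tq) /= => tp.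
  rewrite ffunE in_setU1 setD11 orbF eq_sym tq /= setUCA (setD1K qG).
  congr (_ ^+ _ *: _); congr #|pred_of_set _|; apply/setP => s; rewrite !inE.
  case: (s =P q) => [->|] //=.
  by rewrite qG /= qp; apply/negbTE; rewrite -leqNgt ltnW.
rewrite addr0 -(goodF_S_notin qp _ qG) /=.
case: ifP => gG; last first.
  move/KchP: fK => ->; first by rewrite mul0mx scaler0 addr0.
  by rewrite goodF_setU1 ?gG // qp.
rewrite (bigD1 q) /=; last by rewrite (ltnS_last qp) eqxx qG.
rewrite addrC; congr (_ + _).
  apply: eq_big => [t|t].
    rewrite (ltnS_last qp) andbC andbA; case: (t =P q) => [->|_] /=.
      by rewrite qp ltnn ?andbF.
    by rewrite andbC.
  move=> /andP [/andP [tp tG] tq]; rewrite (ltnS_last qp) (negbTE tq) /= in tp.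
  by rewrite ffunE goodF_setU1 // -(goodF_S_notin qp _ qG) gG.
have gG' : goodF p i G by rewrite -(goodF_S_notin qp _ qG).
have -> : [set s in G | (s < q)%N] = G.
  by apply/setP => s; rewrite !inE qp; apply/andb_idr/(goodF_lt gG').
by case/andP: gG => _ /eqP ->.
Qed.

Lemma chcoef_kdiff i e e' (z : Ch e) : z \in Kch p.+1 i.+1 e ->
  chcoef q (kd p.+1 i.+1 e e' z) = kd p i e e' (chcoef q z).
Proof.
move=> zK; rewrite (kdiff_split e' zK) !linearD linearZ /=.
rewrite (chcoef_Kch (kdiff_Kch _ _ _ _)).
rewrite (chcoef_Kch (mulch_Kch _ _ (chcoef_KchS zK))) scaler0 addr0 add0r.
exact/chcoef_wedge/kdiff_Kch.
Qed.

Lemma chproj_kdiff i e e' (z : Ch e) : z \in Kch p.+1 i.+1 e ->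
  chproj p i e' (kd p.+1 i.+1 e e' z) =
  kd p i.+1 e e' (chproj p i.+1 e z) + (-1) ^+ i *: mulch (C q) e e' (chcoef q z).
Proof.
move=> zK; have mK := mulch_Kch e' (C q) (chcoef_KchS zK).
rewrite (kdiff_split e' zK) !linearD linearZ /= chproj_wedge addr0 (chprojK mK).
by rewrite chprojK //; exact: kdiff_Kch.
Qed.

End LastVariable.

Lemma kdiff_kdiff p i e e' e'' (x : Ch e) : (p <= n)%N ->
  kd p i e' e'' (kd p i.+1 e e' x) = 0.
Proof.
elim: p i e e' e'' x => [|p IHp] i e e' e'' x pn; first by rewrite kdiff0p.
case: i => [|i]; first by apply/ffunP => G; rewrite !ffunE.
pose q := Ordinal pn; have qp : nat_of_ord q = p by [].
rewrite -[kd p.+1 i.+2 e e' x]kdiff_chproj; set f := chproj _ _ _ x.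
have fK : f \in Kch p.+1 i.+2 e by exact: chproj_Kch.
have gK : chcoef q f \in Kch p i.+1 e by exact: chcoef_KchS.
have dfK : kd p.+1 i.+2 e e' f \in Kch p.+1 i.+1 e' by exact: kdiff_Kch.
rewrite (kdiff_split qp e'' dfK) (chproj_kdiff qp e' fK) (chcoef_kdiff qp e' fK).
rewrite linearD linearZ /= IHp ?(ltnW pn) // add0r kdiff_mulch IHp ?(ltnW pn) //.
by rewrite linear0 addr0 exprS mulN1r scaleNr addNr.
Qed.

(* Cycles and boundaries of [Zcyc]/[Bbd], with the degrees of the source and
   target of the differentials left as independent parameters. *)
Definition cyc p i s t : {vspace Ch s} := (lker (linfun (kd p i s t)) :&: Kch p i s)%VS.
Definition bdry p i s0 s : {vspace Ch s} := (linfun (kd p i.+1 s0 s) @: Kch p i.+1 s0)%VS.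
Definition mulhom cf s t : 'Hom(Ch s, Ch t) := linfun (mulch cf s t).

Lemma mem_cyc p i s t (x : Ch s) :
  (x \in cyc p i s t) = (kd p i s t x == 0) && (x \in Kch p i s).
Proof. by rewrite memv_cap memv_ker lfunE. Qed.

Lemma bdryP p i s0 s (x : Ch s) :
  reflect (exists2 z, z \in Kch p i.+1 s0 & x = kd p i.+1 s0 s z) (x \in bdry p i s0 s).
Proof. by apply: (iffP memv_imgP) => [[z zK ->]|[z zK ->]]; exists z; rewrite ?lfunE. Qed.

Lemma mulhom_imgP cf s t (U : {vspace Ch s}) (x : Ch t) :
  reflect (exists2 z, z \in U & x = mulch cf s t z) (x \in mulhom cf s t @: U)%VS.
Proof. by apply: (iffP memv_imgP) => [[z zK ->]|[z zK ->]]; exists z; rewrite ?lfunE. Qed.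

Lemma bdry_sub_cyc p i s0 s t : (p <= n)%N -> (bdry p i s0 s <= cyc p i s t)%VS.
Proof.
by move=> pn; apply/subvP => x /bdryP [z zK ->]; rewrite mem_cyc kdiff_kdiff // eqxx kdiff_Kch.
Qed.

Lemma mulhom_cyc p i s0 s t cf : (mulhom cf s0 s @: cyc p i s0 s <= cyc p i s t)%VS.
Proof.
apply/subvP => x /mulhom_imgP [z]; rewrite mem_cyc => /andP [/eqP dz zK] ->.
by rewrite mem_cyc kdiff_mulch dz linear0 eqxx mulch_Kch.
Qed.

Lemma mulch_bdry p i s0 s t cf (x : Ch s) :
  x \in bdry p i s0 s -> mulch cf s t x \in bdry p i s t.
Proof.
case/bdryP => z zK ->; apply/bdryP; exists (mulch cf s0 s z); first exact: mulch_Kch.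
by rewrite kdiff_mulch.
Qed.

Section LastVariableHomology.
Variables (p : nat) (q : 'I_n).
Hypothesis qp : nat_of_ord q = p.

Lemma cyc_ker_chcoef i s t :
  (cyc p.+1 i.+1 s t :&: lker (linfun (@chcoef q s)))%VS = cyc p i.+1 s t.
Proof.
apply/vspaceP => x; rewrite memv_cap !mem_cyc memv_ker lfunE /=.
apply/idP/idP.
  case/andP => /andP [/eqP dx xK] /eqP cx.
  have xE : x = chproj p i.+1 s x by rewrite {1}(chain_split qp xK) cx linear0 addr0.
  rewrite xE chproj_Kch andbT; move: dx.
  by rewrite (kdiff_split qp t xK) cx !linear0 ?scaler0 !addr0 kdiff_chproj => ->.
case/andP => /eqP dx xK; rewrite (chcoef_Kch qp xK) eqxx andbT (Kch_S xK) andbT.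
rewrite (kdiff_split qp t (Kch_S xK)) (chcoef_Kch qp xK) !linear0 ?scaler0 !addr0.
by rewrite kdiff_chproj dx.
Qed.

Lemma chcoef_cyc i s t : (linfun (@chcoef q s) @: cyc p.+1 i.+1 s t)%VS =
  (cyc p i s t :&: mulhom (C q) s t @^-1: bdry p i s t)%VS.
Proof.
apply/vspaceP => g; apply/memv_imgP/idP.
  case=> u; rewrite mem_cyc => /andP [/eqP du uK] ->; rewrite lfunE /=.
  rewrite memv_cap mem_cyc -memv_preim lfunE /= (chcoef_KchS qp uK) andbT.
  have cdu := chcoef_kdiff qp t uK; have pdu := chproj_kdiff qp t uK.
  rewrite du linear0 in cdu; rewrite du linear0 in pdu.
  rewrite -cdu eqxx /=; apply/bdryP.
  exists (- ((-1) ^+ i *: chproj p i.+1 s u)); first by rewrite memvN memvZ ?chproj_Kch.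
  rewrite linearN linearZ /= -[mulch _ _ _ _](signrZK i).
  by rewrite -(addr0_eq (esym pdu)) scalerN.
rewrite memv_cap mem_cyc -memv_preim lfunE /=.
case/andP => /andP [/eqP dg gK] /bdryP [h hK yh].
have uK : chwedge q g - (-1) ^+ i *: h \in Kch p.+1 i.+1 s.
  by rewrite memvB ?(chwedge_Kch qp) // memvZ // Kch_S.
have cu : chcoef q (chwedge q g - (-1) ^+ i *: h) = g.
  by rewrite linearB linearZ /= (chcoef_Kch qp hK) scaler0 subr0 (chcoef_wedge qp gK).
exists (chwedge q g - (-1) ^+ i *: h); last by rewrite lfunE /= cu.
rewrite mem_cyc uK andbT (kdiff_split qp t uK) cu linearB linearZ /=.
rewrite (chproj_wedge qp) (chprojK hK) dg linear0 addr0 sub0r linearN linearZ /=.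
by rewrite yh addrC subrr.
Qed.

Lemma chcoef_bdry i s0 s : (linfun (@chcoef q s) @: bdry p.+1 i.+1 s0 s)%VS = bdry p i s0 s.
Proof.
apply/vspaceP => w; apply/memv_imgP/bdryP.
  case=> x /bdryP [z zK ->] ->; rewrite lfunE /= (chcoef_kdiff qp s zK).
  by exists (chcoef q z); first exact: (chcoef_KchS qp zK).
case=> g gK ->; exists (kd p.+1 i.+2 s0 s (chwedge q g)).
  by apply/bdryP; exists (chwedge q g) => //; exact: (chwedge_Kch qp gK).
by rewrite lfunE /= (chcoef_kdiff qp s (chwedge_Kch qp gK)) (chcoef_wedge qp gK).
Qed.

Lemma bdry_ker_chcoef i s0 s : (bdry p.+1 i.+1 s0 s :&: lker (linfun (@chcoef q s)))%VS =
  (bdry p i.+1 s0 s + mulhom (C q) s0 s @: cyc p i.+1 s0 s)%VS.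
Proof.
apply/vspaceP => x; rewrite memv_cap memv_ker lfunE /=; apply/idP/idP.
  case/andP => /bdryP [z zK ->]; rewrite (chcoef_kdiff qp s zK) => /eqP dc.
  rewrite (kdiff_split qp s zK) dc linear0 addr0; apply: memv_add.
    by apply/bdryP; exists (chproj p i.+2 s0 z); first exact: chproj_Kch.
  apply/mulhom_imgP; exists ((-1) ^+ i.+1 *: chcoef q z); last by rewrite linearZ.
  by rewrite memvZ // mem_cyc dc eqxx (chcoef_KchS qp zK).
case/memv_addP => a /bdryP [z zK ->] [b /mulhom_imgP [g]].
rewrite mem_cyc => /andP [/eqP dg gK] -> ->.
set c := (-1) ^+ i.+1 : K.
have zgK : z + c *: chwedge q g \in Kch p.+1 i.+2 s0.
  by rewrite memvD ?memvZ //; [exact: Kch_S | exact: chwedge_Kch].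
apply/andP; split.
  have cz : chcoef q (z + c *: chwedge q g) = c *: g.
    by rewrite linearD linearZ /= (chcoef_Kch qp zK) add0r (chcoef_wedge qp gK).
  have pz : chproj p i.+2 s0 (z + c *: chwedge q g) = z.
    by rewrite linearD linearZ /= (chprojK zK) (chproj_wedge qp) scaler0 addr0.
  apply/bdryP; exists (z + c *: chwedge q g) => //.
  by rewrite (kdiff_split qp s zgK) cz pz !linearZ /= dg ?linear0 ?scaler0 ?addr0 signrZK.
by rewrite linearD /= (chcoef_Kch qp (kdiff_Kch _ _ _ _)) (chcoef_Kch qp (mulch_Kch _ _ gK)) addr0.
Qed.

Lemma dim_cycS i s t : \dim (cyc p.+1 i.+1 s t) =
  (\dim (cyc p i.+1 s t) + \dim (cyc p i s t :&: mulhom (C q) s t @^-1: bdry p i s t))%N.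
Proof. by rewrite -(limg_ker_dim (linfun (@chcoef q s)) (cyc p.+1 i.+1 s t)) cyc_ker_chcoef chcoef_cyc. Qed.

Lemma dim_bdryS i s0 s : \dim (bdry p.+1 i.+1 s0 s) =
  (\dim (mulhom (C q) s0 s @: cyc p i.+1 s0 s + bdry p i.+1 s0 s) + \dim (bdry p i s0 s))%N.
Proof.
by rewrite -(limg_ker_dim (linfun (@chcoef q s)) (bdry p.+1 i.+1 s0 s)) bdry_ker_chcoef chcoef_bdry addvC.
Qed.

End LastVariableHomology.

Definition hdim p i s t s0 := (\dim (cyc p i s t) - \dim (bdry p i s0 s))%N.
Definition ddim cf b a s0 s u :=
  (\dim (mulhom cf s0 s @: cyc b a s0 u + bdry b a s0 s) - \dim (bdry b a s0 s))%N.

(* Dimension count in H_(i+1)(p) -> H_(i+1)(p) -> H_(i+1)(p+1) -> H_i(p) -> H_i(p),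
   whose outer maps are multiplication by y_(p+1). *)
Lemma hdim_recursion p i s0 s t (pn : (p < n)%N) :
  (hdim p.+1 i.+1 s t s0)%:Z =
    (hdim p i.+1 s t s0)%:Z - (ddim (C (Ordinal pn)) p i.+1 s0 s s)%:Z
    + ((hdim p i s t s0)%:Z - (ddim (C (Ordinal pn)) p i s t t)%:Z).
Proof.
set q := Ordinal pn; have qp : nat_of_ord q = p by [].
have pn' := ltnW pn.
have dZ := dim_cycS qp i s t.
have dB := dim_bdryS qp i s0 s.
have dW := dimv_preim_img_add (mulhom (C q) s t) (cyc p i s t) (bdry p i s t).
have le_dim (U V : {vspace Ch s}) : (U <= V)%VS -> (\dim U <= \dim V)%N by exact: dimvS.
have BZS := le_dim _ _ (bdry_sub_cyc i.+1 s0 s t pn).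
have BZ1 := le_dim _ _ (bdry_sub_cyc i s0 s t pn').
have BZ2 := le_dim _ _ (bdry_sub_cyc i.+1 s0 s t pn').
have BYB1 := le_dim _ _ (addvSr (mulhom (C q) s0 s @: cyc p i.+1 s0 s) (bdry p i.+1 s0 s)).
have YBZ : (\dim (mulhom (C q) s0 s @: cyc p i.+1 s0 s + bdry p i.+1 s0 s)
    <= \dim (cyc p i.+1 s t))%N.
  by apply: dimvS; rewrite subv_add mulhom_cyc bdry_sub_cyc.
have BW : (\dim (bdry p i s0 s)
    <= \dim (cyc p i s t :&: mulhom (C q) s t @^-1: bdry p i s t))%N.
  apply: dimvS; apply/subvP => x xB; rewrite memv_cap -memv_preim lfunE /=.
  by rewrite (subvP (bdry_sub_cyc _ _ _ _ pn') _ xB) (mulch_bdry _ _ xB).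
have BYB0 : (\dim (bdry p i s t)
    <= \dim (mulhom (C q) s t @: cyc p i s t + bdry p i s t))%N.
  exact/dimvS/addvSr.
rewrite /hdim /ddim.
set z1 := \dim (cyc p.+1 i.+1 s t) in dZ BZS *.
set b1 := \dim (bdry p.+1 i.+1 s0 s) in dB BZS *.
set z2 := \dim (cyc p i.+1 s t) in dZ YBZ BZ2 *.
set w := \dim (cyc p i s t :&: _) in dZ dW BW *.
set yb1 := \dim (mulhom (C q) s0 s @: _ + _) in dB BYB1 YBZ *.
set b2 := \dim (bdry p i s0 s) in dB BW BZ1 *.
set yb0 := \dim (mulhom (C q) s t @: _ + _) in dW BYB0 *.
set z3 := \dim (cyc p i s t) in dW BZ1 *.
set b3 := \dim (bdry p i s t) in dW BYB0 *.
set b4 := \dim (bdry p i.+1 s0 s) in BYB1 BZ2 *.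
lia.
Qed.

Definition idealM_at p1 r t : {vspace 'rV[K]_(m t)} :=
  (\sum_(t0 < n | (t0 < p1.-1)%N) limg (linfun (mulmxr (Y (C t0) r t))))%VS.

Lemma ch0_inj s : injective (@ch0 s).
Proof. by move=> u v /ffunP /(_ set0); rewrite !ffunE eqxx. Qed.

Lemma dim_img_ch0 s (U : {vspace 'rV[K]_(m s)}) : \dim (linfun (@ch0 s) @: U) = \dim U.
Proof.
apply: limg_dim_eq; suff -> : lker (linfun (@ch0 s)) = 0%VS by rewrite capv0.
by apply/eqP/lker0P => u v; rewrite !lfunE; exact: ch0_inj.
Qed.

Lemma mulch_ch0 cf s t v : mulch cf s t (ch0 v) = ch0 (v *m Y cf s t).
Proof. by apply/ffunP => F; rewrite !ffunE; case: ifP => _ //; rewrite mul0mx. Qed.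

Lemma Kch0_ch0 p s (x : Ch s) : x \in Kch p 0 s -> x = ch0 (x set0).
Proof.
move/KchP => x0; apply/ffunP => F; rewrite ffunE.
by case: eqP => [->|/eqP F0] //; rewrite x0 // goodF0.
Qed.

Lemma ch0_Kch0 p s v : ch0 v \in Kch p 0 s.
Proof. by apply/KchP => F; rewrite goodF0 ffunE => /negbTE ->. Qed.

Lemma kdiff1_ch0 p s0 s (z : Ch s0) :
  kd p 1 s0 s z = ch0 (\sum_(t0 < n | (t0 < p)%N) z [set t0] *m Y (C t0) s0 s).
Proof.
apply/ffunP => G; rewrite !ffunE /= goodF0; case: eqP => // ->.
apply: eq_big => [t|t _]; first by rewrite inE andbT.
rewrite setU0 (_ : [set s1 in set0 | _] = set0) ?cards0 ?scale1r //.
by apply/setP => x; rewrite !inE.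
Qed.

Lemma bdry0 p s0 s : bdry p 0 s0 s = (linfun (@ch0 s) @: idealM_at p.+1 s0 s)%VS.
Proof.
apply/vspaceP => x; apply/bdryP/memv_imgP.
  case=> z zK ->; rewrite kdiff1_ch0; eexists; last by rewrite lfunE.
  apply: memv_sumr => t0 _; rewrite -[_ *m _](lfunE (mulmxr (Y (C t0) s0 s))).
  exact/memv_img/memvf.
case=> w /memv_sumP [vs vsH ->] ->.
pose u (t0 : 'I_n) := ((linfun (mulmxr (Y (C t0) s0 s)))^-1)%VF (vs t0).
exists [ffun F : {set 'I_n} => \sum_(t0 < n | (t0 < p)%N && (F == [set t0])) u t0].
  apply/KchP => F nF; rewrite ffunE big1 // => t0 /andP [tp /eqP FE].
  by move: nF; rewrite FE /goodF sub1set inE tp cards1.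
rewrite kdiff1_ch0 lfunE /=; congr (ch0 _); apply: eq_bigr => t0 tp.
rewrite ffunE (big_pred1 t0); last first.
  by move=> t1 /=; rewrite (inj_eq set1_inj) eq_sym; case: eqP => [->|]; rewrite ?tp ?andbF.
by rewrite -{1}(limg_lfunVK (vsH t0 tp)) /u lfunE.
Qed.

Lemma cyc0 p s t : cyc p 0 s t = Kch p 0 s.
Proof.
apply/vspaceP => x; rewrite mem_cyc.
have -> : kd p 0 s t x = 0 by apply/ffunP => G; rewrite !ffunE.
by rewrite eqxx.
Qed.

Lemma cyc0_preim_bdry0 p cf s t :
  (cyc p 0 s t :&: mulhom cf s t @^-1: bdry p 0 s t)%VS =
  (linfun (@ch0 s) @: (linfun (mulmxr (Y cf s t)) @^-1: idealM_at p.+1 s t))%VS.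
Proof.
apply/vspaceP => x; rewrite memv_cap cyc0 -memv_preim lfunE /= bdry0.
apply/andP/memv_imgP.
  case=> xK; rewrite (Kch0_ch0 xK) mulch_ch0 => /memv_imgP [w wI].
  rewrite lfunE /= => /ch0_inj ew; exists (x set0); last by rewrite lfunE.
  by rewrite -memv_preim lfunE /= ew.
case=> v; rewrite -memv_preim lfunE /= => vI ->; rewrite lfunE /=.
split; first exact: ch0_Kch0.
by rewrite mulch_ch0 -[ch0 _](lfunE (@ch0 t)); exact: memv_img.
Qed.

(* In homological degree 0 the kernel of multiplication by y on
   H_0(p) = M/(y_1..y_p)M is ((y_1..y_p)M :_M y)/(y_1..y_p)M. *)
Lemma hdim0_sub_ddim p cf s0 s t : (p <= n)%N ->
  (hdim p 0 s t s0)%:Z - (ddim cf p 0 s t t)%:Z =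
  (\dim (linfun (mulmxr (Y cf s t)) @^-1: idealM_at p.+1 s t))%:Z
  - (\dim (idealM_at p.+1 s0 s))%:Z.
Proof.
move=> pn.
have dW := dimv_preim_img_add (mulhom cf s t) (cyc p 0 s t) (bdry p 0 s t).
rewrite cyc0_preim_bdry0 dim_img_ch0 in dW.
have dB : \dim (bdry p 0 s0 s) = \dim (idealM_at p.+1 s0 s) by rewrite bdry0 dim_img_ch0.
have BYB : (\dim (bdry p 0 s t) <= \dim (mulhom cf s t @: cyc p 0 s t + bdry p 0 s t))%N.
  exact/dimvS/addvSr.
have BZ : (\dim (bdry p 0 s0 s) <= \dim (cyc p 0 s t))%N by exact/dimvS/bdry_sub_cyc.
rewrite /hdim /ddim.
set z := \dim (cyc p 0 s t) in dW BZ *.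
set b0 := \dim (bdry p 0 s0 s) in dB BZ *.
set b := \dim (bdry p 0 s t) in dW BYB *.
set yb := \dim (mulhom cf s t @: _ + _) in dW BYB *.
set col := \dim (linfun (mulmxr _) @^-1: _) in dW *.
set I := \dim (idealM_at p.+1 s0 s) in dB *.
lia.
Qed.

Lemma ycoef_ord p (pn : (p < n)%N) : ycoef C p = C (Ordinal pn).
Proof. by rewrite /ycoef -[p]/(val (Ordinal pn)) valK. Qed.

Lemma idealM_at_sub_preim p1 cf r s t :
  (idealM_at p1 r s <= linfun (mulmxr (Y cf s t)) @^-1: idealM_at p1 s t)%VS.
Proof.
apply/subv_sumP => t0 tp; apply/subvP => x /memv_imgP [v _ ->].
rewrite -memv_preim !lfunE /= -mulmxA Ymx_comm mulmxA.
apply: (subvP (sumv_sup t0 tp (subvv _))).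
by rewrite -[_ *m _](lfunE (mulmxr (Y (C t0) s t))); exact/memv_img/memvf.
Qed.

Lemma hK_hdim p i j : hK X C p i j = hdim p i (j - i%:Z) (j - i%:Z + 1) (j - i%:Z - 1).
Proof. by []. Qed.

Lemma delta_ddim a b c : delta X C a b c =
  ddim (ycoef C b) b a (c - a%:Z - 1) (c - a%:Z) (c - a%:Z - 1 + 1).
Proof. by []. Qed.

Lemma alphaE p1 j : (alpha X C p1 j)%:Z =
  (\dim (linfun (mulmxr (Y (ycoef C p1.-1) j (j + 1))) @^-1: idealM_at p1 j (j + 1)))%:Z
  - (\dim (idealM_at p1 (j - 1) j))%:Z.
Proof.
rewrite /alpha /idealM -/(idealM_at p1 (j + 1 - 1) (j + 1)) -/(idealM_at p1 (j - 1) j).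
by rewrite addrK subzn //; exact: dimvS (idealM_at_sub_preim _ _ _ _ _).
Qed.

Lemma hK_recursion p i k : (p < n)%N ->
  (hK X C p.+1 i.+1 (i.+1 + k)%N%:Z)%:Z =
    (hK X C p i.+1 (i.+1 + k)%N%:Z)%:Z - (delta X C i.+1 p (i.+1 + k)%N%:Z)%:Z
    + (if i is i'.+1
       then (hK X C p i (i + k)%N%:Z)%:Z - (delta X C i p (i + k).+1%:Z)%:Z
       else (alpha X C p.+1 k%:Z)%:Z).
Proof.
move=> pn; have ik : (i.+1 + k)%N%:Z - i.+1%:Z = k%:Z by rewrite PoszD addrC addKr.
rewrite !hK_hdim !delta_ddim ik (hdim_recursion _ _ _ _ pn) subrK (ycoef_ord pn).
case: i ik => [|i] ik.
  by rewrite hdim0_sub_ddim ?(ltnW pn) // alphaE /= (ycoef_ord pn).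
have -> : (i.+1 + k)%N%:Z - i.+1%:Z = k%:Z by rewrite PoszD addrC addKr.
have -> : (i.+1 + k).+1%:Z - i.+1%:Z = k%:Z + 1.
  by rewrite -addn1 -addnA PoszD addrC addKr PoszD.
by rewrite addrK.
Qed.

Lemma cyc0S i s t : cyc 0 i.+1 s t = 0%VS.
Proof.
apply/vspaceP => x; rewrite memv0 memv_cap.
by apply/andP/eqP => [[_ /Kch0S_eq0 //]|->]; split; apply: mem0v.
Qed.

Lemma hK0p i j : hK X C 0 i.+1 j = 0%N.
Proof. by rewrite hK_hdim /hdim cyc0S dimv0. Qed.

Lemma delta0b a c : delta X C a.+1 0 c = 0%N.
Proof. by rewrite delta_ddim /ddim cyc0S limg0 add0v subnn. Qed.

End Koszul.

Theorem proposition1p1 (K : fieldType) (n : nat) (m : int -> nat)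
  (X : forall (k : 'I_n) (e : int), 'M[K]_(m e, m (e + 1))) :
  K_infinite K -> graded_module X -> fin_generated X ->
  exists P : {mpoly K[n * n]}, P != 0 /\
    forall C : 'M[K]_n, P.@[fun t => mxvec C 0 t] != 0 ->
    forall i k p : nat, (1 <= i)%N -> (1 <= p <= n)%N ->
      ((hK X C p i (i + k)%N%:Z)%:Z =
        (\sum_(1 <= j < p.+2 - i) ('C(p - j, i - 1) * alpha X C j k%:Z)%N%:Z)
        - (\sum_(1 <= b < p) \sum_(maxn (i + b - p) 1 <= a < i.+1)
            (binz (p - b - 1) (i%:Z - a%:Z) * delta X C a b (a + k)%N%:Z
             + binz (p - b - 1) (i%:Z - a%:Z - 1) * delta X C a b (a + k).+1%:Z)%N%:Z))%R.
Proof.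
(* The identity holds for every sequence of linear forms, so P = 1 will do. *)
move=> _ gmX _; exists 1; split=> [|C _ [//|i] k p _ /andP [_ pn]]; first exact: oner_neq0.
rewrite alpha_sum_nat delta_sum_nat; last 2 first.
- by move=> a; exact: delta0b.
- by move=> a; exact: delta0b.
apply: (h_formula_recursion (h := fun p i => hK X C p i (i + k)%N%:Z)) pn i => [i'|p' [|i'] pn'].
- exact: hK0p.
- exact: (hK_recursion gmX C 0 k pn').
- exact: (hK_recursion gmX C i'.+1 k pn').
Qed.
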